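(* Let $m\geq1$, let $X$ be a weak complicial set in which every $k$-simplex is thin for every $k\geq m$, and let $x\in X_0$ be a vertex. Then for every $n\geq m$ the homotopy monoid $\tau_n(X,x)$ is a group.
   Context: A stratified simplicial set is a pair $(X,tX)$ where $X$ is a simplicial set and $tX$ is a set of simplices of $X$ (thin simplices) containing all degenerate simplices and no $0$-simplices; stratified maps are simplicial maps preserving thin simplices. A regular stratified subset $(X,tX)\subset(Y,tY)$ means $X\subset Y$, $tX=X\cap tY$. For $n\ge1$, $\Delta[n]_t$ is $\Delta[n]$ with thin simplices the degenerate ones and $\mathrm{Id}_{[n]}$. For $k\in[n]$, $\Delta^k[n]$ is $\Delta[n]$ with thin simplices the degenerate ones and all $\alpha:[m]\to[n]$ with $\{k-1,k,k+1\}\cap[n]\subset\mathrm{Im}(\alpha)$; $\Lambda^k[n]$ is the regular stratified subset of $\Delta^k[n]$ generated by the faces $\delta_i$, $i\neq k$; $\Delta^k[n]''$ (resp. $\Lambda^k[n]'$) is $\Delta^k[n]$ (resp. $\Lambda^k[n]$) with additionally all its $(n-1)$-simplices thin; $\Delta^k[n]'=\Delta^k[n]\cup\Lambda^k[n]'$. A weak complicial set is a stratified simplicial set with the right lifting property against $\Lambda^k[n]\hookrightarrow\Delta^k[n]$ ($n\ge1$, $k\in[n]$) and $\Delta^k[n]'\hookrightarrow\Delta^k[n]''$ ($n\ge2$, $k\in[n]$). The product $X\circledast Y$ has underlying simplicial set $X\times Y$, with $(x,y)$ thin iff $x$ and $y$ are thin. For stratified maps $f,g:A\to X$ and an inclusion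 $B\hookrightarrow A$ with $f|_B=g|_B$, $f\sim_B g$ means there is a stratified map $H:A\circledast\Delta[1]_t\to X$ with $H|_{A\times\{0\}}=f$, $H|_{A\times\{1\}}=g$ and $H|_{B\circledast\Delta[1]_t}=f|_B\circ\mathrm{proj}_B$; $n$-simplices are regarded as stratified maps from $\Delta[n]$ with only degenerate simplices thin. For $n\ge1$, $\tau_n(X,x)$ is the set of $\sim_{\partial\Delta[n]}$-classes of $n$-simplices $\alpha$ whose restriction to $\partial\Delta[n]$ is constant at $x$, with multiplication $[\alpha][\beta]=[d_n\theta]$ where $\theta:\Delta^n[n+1]\to X$ is any stratified map with $d_{n-1}\theta=\alpha$, $d_{n+1}\theta=\beta$, and $d_i\theta$ constant at $x$ for $i\notin\{n-1,n,n+1\}$; this is a monoid with unit the class of the constant simplex at $x$. *)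

From Stdlib Require Import Relations.Relation_Operators.
From mathcomp Require Import all_boot.
From mathcomp Require Import zify.

Set Implicit Arguments.
Unset Strict Implicit.
Unset Printing Implicit Defensive.

Definition monob m n (f : {ffun 'I_m.+1 -> 'I_n.+1}) : bool :=
  [forall i : 'I_m.+1, forall j : 'I_m.+1, (i <= j) ==> (f i <= f j)].

Definition Mon m n := {f : {ffun 'I_m.+1 -> 'I_n.+1} | monob f}.

Definition monf m n (a : Mon m n) : 'I_m.+1 -> 'I_n.+1 := fun i => sval a i.

Lemma monoP m n (f : {ffun 'I_m.+1 -> 'I_n.+1}) :
  monob f -> forall i j : 'I_m.+1, i <= j -> f i <= f j.
Proof. by move=> /forallP H i j hij; move: (H i) => /forallP /(_ j) /implyP; apply. Qed.

Lemma mon_comp_proof m n p (b : Mon n p) (a : Mon m n) :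
  monob [ffun i => sval b (sval a i)].
Proof.
apply/forallP => i; apply/forallP => j; apply/implyP => hij; rewrite !ffunE.
by apply: (monoP (proj2_sig b)); apply: (monoP (proj2_sig a)).
Qed.

Definition mon_comp m n p (b : Mon n p) (a : Mon m n) : Mon m p :=
  exist _ [ffun i => sval b (sval a i)] (mon_comp_proof b a).

Lemma constMon_proof m n (j : 'I_n.+1) : monob [ffun _ : 'I_m.+1 => j].
Proof. by apply/forallP => i; apply/forallP => k; rewrite !ffunE leqnn implybT. Qed.

Definition constMon m n (j : 'I_n.+1) : Mon m n :=
  exist _ [ffun _ => j] (constMon_proof m j).

Lemma faceMon_proof n (i : 'I_n.+2) : monob [ffun j : 'I_n.+1 => lift i j].
Proof.
apply/forallP => j; apply/forallP => k; apply/implyP => hjk; rewrite !ffunE /=.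
rewrite /bump; case: (leqP i j) => h1; case: (leqP i k) => h2 /=; lia.
Qed.

Definition faceMon n (i : 'I_n.+2) : Mon n n.+1 :=
  exist _ [ffun j => lift i j] (faceMon_proof i).

Record sSet := { sobj :> nat -> Type;
                 sact : forall m n, Mon m n -> sobj n -> sobj m }.
Arguments sact {s m n}.

Record ssSet := { sbase :> sSet; sthin : forall m, sbase m -> Prop }.
Arguments sthin {s m}.

Lemma idMon_proof n : monob [ffun i : 'I_n.+1 => i].
Proof. by apply/forallP => i; apply/forallP => j; rewrite !ffunE; apply/implyP. Qed.

Definition idMon n : Mon n n := exist _ [ffun i => i] (idMon_proof n).

Definition is_simplicial (X : sSet) : Prop :=
  (forall n (x : X n), sact (idMon n) x = x) /\
  (forall m n p (a : Mon m n) (b : Mon n p) (x : X p),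
      sact (mon_comp b a) x = sact a (sact b x)).

Definition degenerate (X : sSet) m (x : X m) : Prop :=
  exists k (s : Mon m k) (y : X k), k < m /\ x = sact s y.

Definition is_strat (X : ssSet) : Prop :=
  [/\ is_simplicial X,
      (forall m (x : X m), degenerate x -> sthin x) &
      (forall x : X 0, ~ sthin x)].

Definition is_smap (A B : ssSet) (f : forall m, A m -> B m) : Prop :=
  (forall m n (a : Mon m n) (y : A n), f m (sact a y) = sact a (f n y)) /\
  (forall m (y : A m), sthin y -> sthin (f m y)).
Arguments is_smap : clear implicits.

Definition RLP (A B : ssSet) (i : forall m, A m -> B m) (X : ssSet) : Prop :=
  forall f, is_smap A X f ->
    exists g, is_smap B X g /\ forall m (y : A m), g m (i m y) = f m y.

Definition subSS (A : ssSet) (P : forall m, A m -> Prop)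
  (HP : forall m n (a : Mon m n) (y : A n), P n y -> P m (sact a y)) : ssSet :=
  {| sbase := {| sobj := fun m => {y : A m | P m y};
                 sact := fun m n a y => exist _ (sact a (sval y)) (HP m n a (sval y) (proj2_sig y)) |};
     sthin := fun m y => sthin (sval y) |}.

Definition prodSS (A B : ssSet) : ssSet :=
  {| sbase := {| sobj := fun m => (A m * B m)%type;
                 sact := fun m n a y => (sact a y.1, sact a y.2) |};
     sthin := fun m y => sthin y.1 /\ sthin y.2 |}.

Definition DeltaS n : sSet :=
  {| sobj := fun m => Mon m n; sact := fun m p (a : Mon m p) (b : Mon p n) => mon_comp b a |}.

Definition Delta_deg n : ssSet :=
  {| sbase := DeltaS n; sthin := fun m a => degenerate (X := DeltaS n) a |}.

Definition Delta_t n : ssSet :=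
  {| sbase := DeltaS n;
     sthin := fun m a => degenerate (X := DeltaS n) a \/
                         (m = n /\ forall i : 'I_m.+1, val (monf a i) = val i) |}.

(* {k-1,k,k+1} /\ [n] is contained in the image of a *)
Definition kthin n k m (a : Mon m n) : Prop :=
  forall j : 'I_n.+1, k <= j.+1 -> j <= k.+1 -> exists i, monf a i = j.

Definition DeltaK n k : ssSet :=
  {| sbase := DeltaS n;
     sthin := fun m a => degenerate (X := DeltaS n) a \/ kthin k a |}.

(* a factors through some face delta_i with i <> k *)
Definition horn n k m (a : Mon m n) : Prop :=
  exists i : 'I_n.+1, val i != k /\ forall j, monf a j != i.

(* a factors through some face delta_i *)
Definition bdry n m (a : Mon m n) : Prop :=
  exists i : 'I_n.+1, forall j, monf a j != i.

Lemma horn_closed n k m p (a : Mon m p) (y : Mon p n) :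
  horn k y -> horn k (mon_comp y a).
Proof. by case=> i [hi hj]; exists i; split=> // j; rewrite /monf /= ffunE; apply: hj. Qed.

Lemma bdry_closed n m p (a : Mon m p) (y : Mon p n) :
  bdry y -> bdry (mon_comp y a).
Proof. by case=> i hj; exists i => j; rewrite /monf /= ffunE; apply: hj. Qed.

Definition Horn n k : ssSet :=
  subSS (P := fun m (y : DeltaK n k m) => horn k y) (fun m p a y => @horn_closed n k m p a y).

Definition horn_incl n k : forall m, Horn n k m -> DeltaK n k m := fun m y => sval y.

Definition Bdry n : ssSet :=
  subSS (P := fun m (y : Delta_deg n m) => bdry y) (fun m p a y => @bdry_closed n m p a y).

Definition DeltaK' n k : ssSet :=
  {| sbase := DeltaS n;
     sthin := fun m a => sthin (s := DeltaK n k) a \/ (m = n.-1 /\ horn k a) |}.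

Definition DeltaK'' n k : ssSet :=
  {| sbase := DeltaS n;
     sthin := fun m a => sthin (s := DeltaK n k) a \/ m = n.-1 |}.

Definition weak_complicial (X : ssSet) : Prop :=
  (forall n k, 1 <= n -> k <= n -> RLP (@horn_incl n k) X) /\
  (forall n k, 2 <= n -> k <= n ->
     RLP (A := DeltaK' n k) (B := DeltaK'' n k) (fun m y => y) X).

(* an n-simplex, regarded as a (stratified) map from Delta[n] *)
Definition simplex (X : ssSet) n := forall m, Mon m n -> X m.

Definition cst (X : ssSet) (x : X 0) m : X m := sact (constMon m (ord0 : 'I_1)) x.

Definition sphere (X : ssSet) n (x : X 0) (a : simplex X n) : Prop :=
  is_smap (Delta_deg n) X a /\ forall m (b : Mon m n), bdry b -> a m b = cst x m.

Definition htpy (X : ssSet) n (f g : simplex X n) : Prop :=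
  exists H : forall m, prodSS (Delta_deg n) (Delta_t 1) m -> X m,
    [/\ is_smap _ _ H,
        (forall m (a : Mon m n), H m (a, constMon m (ord0 : 'I_2)) = f m a),
        (forall m (a : Mon m n), H m (a, constMon m (ord_max : 'I_2)) = g m a) &
        (forall m (a : Mon m n) (t : Mon m 1), bdry a -> H m (a, t) = f m a)].

Definition hrel (X : ssSet) n (x : X 0) (f g : simplex X n) : Prop :=
  [/\ sphere x f, sphere x g & htpy f g].

(* equality of classes in tau_n(X,x): the equivalence relation generated by ~ *)
Definition hequiv (X : ssSet) n (x : X 0) : simplex X n -> simplex X n -> Prop :=
  clos_refl_sym_trans _ (@hrel X n x).

Definition face (X : ssSet) n (th : simplex X n.+1) (i : nat) : simplex X n :=
  fun m b => th m (mon_comp (faceMon (inord i : 'I_n.+2)) b).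
Arguments face {X n}.

(* [a][b] = [c] in tau_n(X,x) *)
Definition tau_mul_eq (X : ssSet) n (x : X 0) (a b c : simplex X n) : Prop :=
  exists th : simplex X n.+1,
    [/\ is_smap (DeltaK n.+1 n) X th,
        (forall m y, face th n.-1 m y = a m y),
        (forall m y, face th n.+1 m y = b m y),
        (forall i, i <= n.+1 -> i \notin [:: n.-1; n; n.+1] ->
             forall m y, face th i m y = cst x m) &
        hequiv x (face th n) c].

Definition tau_unit (X : ssSet) n (x : X 0) : simplex X n := fun m _ => cst x m.

(* tau_n(X,x) is a group: every class has a two-sided inverse *)
Definition tau_is_group (X : ssSet) (n : nat) (x : X 0) : Prop :=
  forall a : simplex X n, sphere x a ->
    exists b : simplex X n,
      [/\ sphere x b, tau_mul_eq x a b (tau_unit x) & tau_mul_eq x b a (tau_unit x)].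
Arguments tau_is_group {X} n x.

From mathcomp Require Import all_boot zify.
From Stdlib Require Import FunctionalExtensionality Relations.Relation_Operators.

Set Implicit Arguments.
Unset Strict Implicit.
Unset Printing Implicit Defensive.

(* Let a be an n-simplex with boundary at x. Filling the horn Lambda^{n+1}[n+1]
   whose (n-1)-st face is a and whose other faces are trivial gives a simplex th
   whose n-th face is trivial, so its last face b satisfies [a][b] = 1. Filling
   the horn Lambda^{n+2}[n+2] with faces th s_{n-1}, a s_{n-1} s_{n-1} and
   a s_n s_n in positions n-1, n, n+1 and trivial faces below gives, as its last
   face, a witness of [b][a] = 1. All these maps are stratified: simplices of
   dimension >= m are thin, the ones of smaller positive dimension are
   degenerate at x, and no vertex of Delta^k[N] is thin. *)

Lemma mon_ext m n (a b : Mon m n) :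
  (forall i, monf a i = monf b i :> nat) -> a = b.
Proof. by move=> eq_ab; apply: val_inj; apply/ffunP => i; apply: val_inj; exact: eq_ab. Qed.

Lemma monf_comp m n p (b : Mon n p) (a : Mon m n) i :
  monf (mon_comp b a) i = monf b (monf a i).
Proof. by rewrite /monf /= ffunE. Qed.

Lemma mon_compA m n p q (c : Mon p q) (b : Mon n p) (a : Mon m n) :
  mon_comp c (mon_comp b a) = mon_comp (mon_comp c b) a.
Proof. by apply: mon_ext => i; rewrite !monf_comp. Qed.

Lemma monf_const m n (j : 'I_n.+1) i : monf (constMon m j) i = j.
Proof. by rewrite /monf /= ffunE. Qed.

Lemma monf_face n i j : i <= n.+1 ->
  monf (faceMon (inord i : 'I_n.+2)) j = j + (i <= j) :> nat.
Proof. by move=> le_i; rewrite /monf /= ffunE /= inordK // addnC. Qed.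

Definition natMon m n (g : nat -> nat) : Mon m n :=
  insubd (constMon m ord0) [ffun i : 'I_m.+1 => (inord (g i) : 'I_n.+1)].

Lemma monf_natMon m n g :
  (forall i, i <= m -> g i <= n) -> (forall i j, i <= j <= m -> g i <= g j) ->
  forall i : 'I_m.+1, monf (natMon m n g) i = g i :> nat.
Proof.
move=> g_le g_mono i.
have g_lt (k : 'I_m.+1) : g k < n.+1 by rewrite ltnS g_le // -ltnS.
have g_monob : monob [ffun i : 'I_m.+1 => (inord (g i) : 'I_n.+1)].
  apply/forallP => i1; apply/forallP => j1; apply/implyP => le_ij; rewrite !ffunE /=.
  by rewrite !inordK // g_mono // le_ij /= -ltnS.
by rewrite /monf /natMon val_insubd g_monob ffunE /= inordK.
Qed.

(* The degeneracy s_i : [N+1] -> [N]; the [minn] only matters for the junk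
   values [i > N]. *)
Definition degenMon N i : Mon N.+1 N := natMon N.+1 N (fun j => j - (minn i N < j)).

Lemma monf_degen N i j : monf (degenMon N i) j = j - (minn i N < j) :> nat.
Proof. by rewrite monf_natMon // => *; lia. Qed.

Definition miss d N (z : Mon d N) (v : nat) : bool := [forall j, monf z j != v :> nat].

Lemma missP d N (z : Mon d N) v : reflect (forall j, monf z j != v :> nat) (miss z v).
Proof. exact: forallP. Qed.

Lemma miss_comp d e N (z : Mon d N) (al : Mon e d) v : miss z v -> miss (mon_comp z al) v.
Proof. by move/missP=> z_v; apply/missP => j; rewrite monf_comp. Qed.

Lemma miss_face n i m (y : Mon m n) : i <= n.+1 ->
  miss (mon_comp (faceMon (inord i : 'I_n.+2)) y) i.
Proof. by move=> le_i; apply/missP => j; rewrite monf_comp monf_face //; lia. Qed.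

Lemma hornP d N k (z : Mon d N) :
  horn k z <-> exists v, [/\ v <= N, v != k & miss z v].
Proof.
split=> [[i [i_k z_i]] | [v [le_v v_k /missP z_v]]].
  by exists i; split=> //; [rewrite -ltnS | apply/missP].
exists (inord v); split=> [|j]; first by rewrite /= inordK.
by apply: contra_neq (z_v j) => ->; rewrite inordK.
Qed.

Lemma bdryP d N (z : Mon d N) : bdry z <-> exists2 v, v <= N & miss z v.
Proof.
split=> [[i z_i] | [v le_v /missP z_v]]; first by exists i; [rewrite -ltnS | apply/missP].
by exists (inord v) => j; apply: contra_neq (z_v j) => ->; rewrite inordK.
Qed.

Lemma codom_avoid (T : finType) n (f : 'I_n -> T) (A : {pred T}) :
  n < #|A| -> exists2 v, v \in A & v \notin codom f.
Proof.
move=> lt_n_A; apply/subsetPn; apply: contraTN lt_n_A => /subset_leq_card le_A.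
by rewrite -leqNgt (leq_trans le_A) // (leq_trans (card_size _)) // size_codom card_ord.
Qed.

Lemma miss_codom d N (z : Mon d N) (v : 'I_N.+1) : v \notin codom (monf z) -> miss z v.
Proof. by move=> z_v; apply/missP => j; apply: contraNneq z_v => /ord_inj <-; apply: codom_f. Qed.

Lemma exists_miss d N (z : Mon d N) : d < N -> exists2 v, v <= N & miss z v.
Proof.
move=> lt_dN; have [|v _ z_v] := @codom_avoid _ _ (monf z) predT; first by rewrite card_ord.
by exists v; [rewrite -ltnS | apply: miss_codom].
Qed.

Lemma exists_miss_neq d N (z : Mon d N) k : d.+1 < N ->
  exists v, [/\ v <= N, v != k & miss z v].
Proof.
move=> lt_dN; pose A := [pred v : 'I_N.+1 | v != k :> nat].
have N_le_A : N <= #|A|.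
  apply: leq_trans (subset_leq_card (_ : predC1 (inord k) \subset A)).
    by rewrite cardC1 card_ord.
  apply/subsetP => v; rewrite !inE; apply: contra => /eqP v_k.
  by apply/eqP/ord_inj; rewrite inordK // -v_k.
have [v A_v z_v] := @codom_avoid _ _ (monf z) A (leq_trans lt_dN N_le_A).
by exists v; split; [rewrite -ltnS | | apply: miss_codom].
Qed.

Definition natural (X : ssSet) N (s : simplex X N) : Prop :=
  forall d e (al : Mon e d) (w : Mon d N), s e (mon_comp w al) = sact al (s d w).

Definition const_below (X : ssSet) (x : X 0) n N (s : simplex X N) : Prop :=
  forall d (w : Mon d N), d < n -> s d w = cst x d.

Lemma natural_face (X : ssSet) N (s : simplex X N.+1) i : natural s -> natural (face s i).
Proof. by move=> s_nat d e al w; rewrite /face mon_compA s_nat. Qed.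

Lemma const_below_face (X : ssSet) (x : X 0) n N (s : simplex X N.+1) i :
  const_below x n s -> const_below x n (face s i).
Proof. by move=> s_cst d w; apply: s_cst. Qed.

Lemma hequiv_tau_unit (X : ssSet) n (x : X 0) (s : simplex X n) :
  (forall d y, s d y = cst x d) -> hequiv x s (tau_unit x).
Proof.
move=> s_cst; suff -> : s = tau_unit x by apply: rst_refl.
by apply: functional_extensionality_dep => d; apply: functional_extensionality => y; apply: s_cst.
Qed.

Lemma cst_sact (X : ssSet) (x : X 0) d e (al : Mon e d) :
  is_simplicial X -> sact al (cst x d) = cst x e.
Proof.
case=> _ sactM; rewrite /cst -sactM; congr sact.
by apply: mon_ext => i; rewrite monf_comp !monf_const.
Qed.

Lemma cst_thin (X : ssSet) (x : X 0) d : is_strat X -> 0 < d -> sthin (cst x d).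
Proof. by case=> _ deg_thin _ d_gt0; apply: deg_thin; exists 0, (constMon d ord0), x. Qed.

Lemma degenerate_gt0 (S : sSet) d (y : S d) : degenerate y -> 0 < d.
Proof. by case=> k [s [y' [lt_kd _]]]; apply: leq_ltn_trans lt_kd. Qed.

(* Vertices of Delta^k[N] are not thin: {k-1, k, k+1} meets [N] in two points. *)
Lemma DeltaK_thin_gt0 N k d (w : Mon d N) :
  0 < N -> k <= N -> sthin (s := DeltaK N k) w -> 0 < d.
Proof.
case: d w => // w N_gt0 le_kN [/degenerate_gt0 // | w_kthin].
have hit i : i <= N -> k <= i.+1 -> i <= k.+1 -> monf w ord0 = i :> nat.
  move=> le_iN le_ki le_ik.
  have := w_kthin (inord i); rewrite inordK // => /(_ le_ki le_ik) [i0].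
  by rewrite (ord1 i0) => ->; rewrite inordK.
case: (ltnP k N) => [lt_kN | le_Nk].
  by have := hit k; have := hit k.+1; lia.
by have := hit k.-1; have := hit k; lia.
Qed.

Lemma sphere_natural (X : ssSet) n (x : X 0) (a : simplex X n) : sphere x a -> natural a.
Proof. by case=> [[a_nat _] _] d e al w; apply: a_nat. Qed.

Lemma sphere_miss (X : ssSet) n (x : X 0) (a : simplex X n) d (w : Mon d n) v :
  sphere x a -> v <= n -> miss w v -> a d w = cst x d.
Proof. by case=> _ a_bdry le_vn w_v; apply/a_bdry/bdryP; exists v. Qed.

Lemma sphere_const_below (X : ssSet) n (x : X 0) (a : simplex X n) :
  sphere x a -> const_below x n a.
Proof.
by move=> a_sph d w lt_dn; have [v le_vn w_v] := exists_miss w lt_dn; apply: sphere_miss w_v.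
Qed.

Section HomotopyInverses.

Variables (X : ssSet) (x : X 0) (m : nat).
Hypotheses (m_gt0 : 0 < m) (X_strat : is_strat X) (X_wc : weak_complicial X)
  (thin_ge_m : forall k (s : X k), m <= k -> sthin s).

Let X_simplicial : is_simplicial X. Proof. by case: X_strat. Qed.

Lemma const_below_thin n N (s : simplex X N) d (w : Mon d N) :
  m <= n -> const_below x n s -> 0 < d -> sthin (s d w).
Proof.
move=> le_mn s_cst d_gt0; case: (leqP m d) => [le_md | lt_dm]; first exact: thin_ge_m.
by rewrite s_cst; [apply: cst_thin | apply: leq_trans le_mn].
Qed.

Lemma natural_smap_DeltaK n N k (s : simplex X N) :
  m <= n -> 0 < N -> k <= N -> natural s -> const_below x n s -> is_smap (DeltaK N k) X s.
Proof.
move=> le_mn N_gt0 le_kN s_nat s_cst; split=> [d e al w | d w w_thin]; first exact: s_nat.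
exact: const_below_thin s_cst (DeltaK_thin_gt0 N_gt0 le_kN w_thin).
Qed.

Lemma sphereI n (s : simplex X n) :
  m <= n -> natural s -> const_below x n s ->
  (forall d (w : Mon d n) i, i <= n -> miss w i -> s d w = cst x d) -> sphere x s.
Proof.
move=> le_mn s_nat s_cst s_miss; split=> [|d w /bdryP [i le_in w_i]]; last exact: s_miss w_i.
split=> [d e al w | d w /degenerate_gt0 d_gt0]; first exact: s_nat.
exact: const_below_thin s_cst d_gt0.
Qed.

Lemma horn_fill n N k (f : simplex X N) :
  m <= n -> n < N -> k <= N ->
  (forall d e (al : Mon e d) (z : Mon d N), horn k z -> f e (mon_comp z al) = sact al (f d z)) ->
  const_below x n f ->
  exists g : simplex X N,
    [/\ natural g, const_below x n g & forall d z, horn k z -> g d z = f d z].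
Proof.
move=> le_mn lt_nN le_kN f_nat f_cst.
have N_gt0 : 0 < N by apply: leq_ltn_trans lt_nN.
have [|g [[g_nat _] g_ext]] := X_wc.1 N k N_gt0 le_kN (fun d (y : Horn N k d) => f d (sval y)).
  split=> [d e al y | d y y_thin]; first exact: f_nat (proj2_sig y).
  exact: const_below_thin f_cst (DeltaK_thin_gt0 N_gt0 le_kN y_thin).
have g_horn d z (z_horn : horn k z) : g d z = f d z by apply: (g_ext d (exist _ z z_horn)).
exists g; split=> [d e al w | d z lt_dn | //]; first exact: g_nat.
have [v [le_vN v_k z_v]] := @exists_miss_neq _ _ z k (leq_ltn_trans lt_dn lt_nN).
by rewrite g_horn ?f_cst //; apply/hornP; exists v.
Qed.

Section Inverse.

Variables (n : nat) (a : simplex X n).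
Hypotheses (le_mn : m <= n) (a_sphere : sphere x a).

Definition rinv_horn : simplex X n.+1 := fun d z =>
  if miss z n.-1 then a (mon_comp (degenMon n n.-1) z) else cst x d.

Lemma rinv_horn_miss d (z : Mon d n.+1) i :
  i <= n.+1 -> i != n.-1 -> miss z i -> rinv_horn z = cst x d.
Proof.
rewrite /rinv_horn => le_i i_pred /missP z_i; case: ifP => // /missP z_pred.
apply: (sphere_miss (v := i - (n.-1 < i))) => //; first lia.
by apply/missP => j; rewrite monf_comp monf_degen; move: (z_i j) (z_pred j); lia.
Qed.

Lemma rinv_horn_natural d e (al : Mon e d) (z : Mon d n.+1) :
  horn n.+1 z -> rinv_horn (mon_comp z al) = sact al (rinv_horn z).
Proof.
move=> /hornP [v [le_v _ z_v]]; rewrite /rinv_horn.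
case: (boolP (miss z n.-1)) => [z_pred | z_npred].
  by rewrite miss_comp // mon_compA (sphere_natural a_sphere).
rewrite cst_sact //; case: ifP => // zal_pred.
have v_pred : v != n.-1 by apply: contraNneq z_npred => <-.
by have := rinv_horn_miss le_v v_pred (miss_comp al z_v); rewrite /rinv_horn zal_pred.
Qed.

Lemma rinv_horn_const_below : const_below x n rinv_horn.
Proof.
by move=> d z lt_dn; rewrite /rinv_horn; case: ifP => // _; apply: sphere_const_below.
Qed.

Section Filler.

Variable th : simplex X n.+1.
Hypotheses (th_natural : natural th) (th_const_below : const_below x n th)
  (th_horn : forall d (z : Mon d n.+1), horn n.+1 z -> th z = rinv_horn z).

Lemma filler_miss_pred d (w : Mon d n.+1) :
  miss w n.-1 -> th w = a (mon_comp (degenMon n n.-1) w).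
Proof.
move=> w_pred; rewrite th_horn /rinv_horn ?w_pred //.
by apply/hornP; exists n.-1; split=> //; lia.
Qed.

Lemma filler_miss d (w : Mon d n.+1) i : i <= n -> i != n.-1 -> miss w i -> th w = cst x d.
Proof.
move=> le_in i_pred w_i; rewrite th_horn; first exact: rinv_horn_miss (leqW le_in) i_pred w_i.
by apply/hornP; exists i; split=> //; lia.
Qed.

Lemma filler_face_sphere : sphere x (face th n.+1).
Proof.
apply: sphereI le_mn (natural_face _ th_natural) (const_below_face _ th_const_below) _.
move=> d w i le_in /missP w_i; rewrite /face th_horn.
  by apply: (rinv_horn_miss (i := n.+1)); rewrite ?miss_face //; lia.
apply/hornP; exists i; split; [lia | lia | apply/missP => j].
by move: (w_i j) (ltn_ord (monf w j)); rewrite monf_comp monf_face //; lia.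
Qed.

Lemma filler_mul_right : tau_mul_eq x a (face th n.+1) (tau_unit x).
Proof.
exists th; split=> //.
- exact: natural_smap_DeltaK le_mn _ _ th_natural th_const_below.
- move=> d y; rewrite /face filler_miss_pred; last by apply: miss_face; lia.
  congr a; apply: mon_ext => j.
  by move: (ltn_ord (monf y j)); rewrite !monf_comp monf_degen monf_face; lia.
- move=> i le_i; rewrite !inE => i_notin d y.
  by apply: (filler_miss (i := i)); [lia | lia | apply: miss_face; lia].
- apply: hequiv_tau_unit => d y.
  by apply: (filler_miss (i := n)); [| lia | apply: miss_face].
Qed.

Definition linv_horn : simplex X n.+2 := fun d z =>
  if miss z n.-1 then th (mon_comp (degenMon n.+1 n.-1) z)
  else if miss z n then a (mon_comp (degenMon n n.-1) (mon_comp (degenMon n.+1 n.-1) z))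
  else if miss z n.+1 then a (mon_comp (degenMon n n) (mon_comp (degenMon n.+1 n) z))
  else cst x d.

Lemma linv_horn_miss_low d (z : Mon d n.+2) v : v < n.-1 -> miss z v -> linv_horn z = cst x d.
Proof.
move=> lt_v /missP z_v; rewrite /linv_horn.
case: ifP => _.
  apply: (filler_miss (i := v)); [lia | lia | apply/missP => j].
  by move: (z_v j); rewrite monf_comp monf_degen; lia.
case: ifP => _; last case: ifP => _ //.
all: apply: (sphere_miss (v := v) a_sphere); first lia.
all: by apply/missP => j; move: (z_v j); rewrite !monf_comp !monf_degen; lia.
Qed.

Lemma linv_horn_miss_pred d (z : Mon d n.+2) :
  miss z n.-1 -> linv_horn z = th (mon_comp (degenMon n.+1 n.-1) z).
Proof. by rewrite /linv_horn => ->. Qed.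

Lemma linv_horn_miss_n d (z : Mon d n.+2) :
  miss z n -> linv_horn z = a (mon_comp (degenMon n n.-1) (mon_comp (degenMon n.+1 n.-1) z)).
Proof.
move=> z_n; rewrite /linv_horn z_n; case: ifP => // z_pred.
rewrite filler_miss_pred //; apply/missP => j.
by move: z_n z_pred => /missP/(_ j) + /missP/(_ j); rewrite monf_comp monf_degen; lia.
Qed.

Lemma linv_horn_miss_succ d (z : Mon d n.+2) :
  miss z n.+1 -> linv_horn z = a (mon_comp (degenMon n n) (mon_comp (degenMon n.+1 n) z)).
Proof.
move=> z_succ; have /missP z_succ_j := z_succ; rewrite /linv_horn.
case: ifP => [/missP z_pred | _].
  rewrite (sphere_miss (v := n.-1) a_sphere (leq_pred n)); last first.
    by apply/missP => j; move: (z_pred j); rewrite !monf_comp !monf_degen; lia.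
  apply: (filler_miss (i := n)) => //; first lia.
  by apply/missP => j; move: (z_succ_j j) (z_pred j); rewrite monf_comp monf_degen; lia.
case: ifP => [/missP z_n | _]; last by rewrite z_succ.
congr a; apply: mon_ext => j.
by move: (z_n j) (z_succ_j j) (ltn_ord (monf z j)); rewrite !monf_comp !monf_degen; lia.
Qed.

Lemma linv_horn_natural d e (al : Mon e d) (z : Mon d n.+2) :
  horn n.+2 z -> linv_horn (mon_comp z al) = sact al (linv_horn z).
Proof.
move=> /hornP [v [le_v v_k z_v]]; have zal_v := miss_comp al z_v.
have [lt_v | ge_v] := ltnP v n.-1; first by rewrite !(linv_horn_miss_low lt_v) // cst_sact.
have : v \in [:: n.-1; n; n.+1] by rewrite !inE; lia.
rewrite !inE => /or3P [] /eqP v_eq; subst v.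
- by rewrite !linv_horn_miss_pred // mon_compA th_natural.
- by rewrite !linv_horn_miss_n // !mon_compA (sphere_natural a_sphere).
- by rewrite !linv_horn_miss_succ // !mon_compA (sphere_natural a_sphere).
Qed.

Lemma linv_horn_const_below : const_below x n linv_horn.
Proof.
move=> d z lt_dn; rewrite /linv_horn; case: ifP => _; first exact: th_const_below.
by case: ifP => _; last case: ifP => _ //; apply: sphere_const_below.
Qed.

Lemma filler_mul_left : tau_mul_eq x (face th n.+1) a (tau_unit x).
Proof.
have [g [g_nat g_cst g_horn]] :=
  horn_fill le_mn (leqnSn n.+1) (leqnn _) linv_horn_natural linv_horn_const_below.
pose face2 i d (y : Mon d n) :=
  mon_comp (faceMon (inord n.+2)) (mon_comp (faceMon (inord i)) y).
have face2_miss i d (y : Mon d n) : i <= n.+1 -> miss (face2 i d y) i.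
  move=> le_i; apply/missP => j.
  by move: (ltn_ord (monf y j)); rewrite !monf_comp !monf_face //; lia.
have g_face i d (y : Mon d n) :
    i <= n.+1 -> face (face g n.+2) i d y = linv_horn (face2 i d y).
  by move=> le_i; apply: g_horn; apply/hornP; exists i; split; rewrite ?face2_miss //; lia.
exists (face g n.+2); split.
- exact: natural_smap_DeltaK le_mn _ _ (natural_face _ g_nat) (const_below_face _ g_cst).
- move=> d y; have le_pred : n.-1 <= n.+1 by lia.
  rewrite g_face // linv_horn_miss_pred ?face2_miss //.
  congr th; apply: mon_ext => j.
  by move: (ltn_ord (monf y j)); rewrite !monf_comp monf_degen !monf_face //; lia.
- move=> d y; rewrite g_face ?linv_horn_miss_succ ?face2_miss //.
  congr a; apply: mon_ext => j.
  by move: (ltn_ord (monf y j)); rewrite !monf_comp !monf_degen !monf_face //; lia.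
- move=> i le_i; rewrite !inE => i_notin d y.
  by rewrite g_face // (linv_horn_miss_low (v := i)) ?face2_miss //; lia.
- apply: hequiv_tau_unit => d y; rewrite g_face ?linv_horn_miss_n ?face2_miss //.
  apply: (sphere_miss (v := n) a_sphere) => //; apply/missP => j.
  by move: (ltn_ord (monf y j)); rewrite !monf_comp !monf_degen !monf_face //; lia.
Qed.

End Filler.

Lemma sphere_tau_inverse : exists b : simplex X n,
  [/\ sphere x b, tau_mul_eq x a b (tau_unit x) & tau_mul_eq x b a (tau_unit x)].
Proof.
have [th [th_natural th_const_below th_horn]] :=
  horn_fill le_mn (ltnSn n) (leqnn _) rinv_horn_natural rinv_horn_const_below.
exists (face th n.+1); split.
- exact: filler_face_sphere th_natural th_const_below th_horn.
- exact: filler_mul_right th_natural th_const_below th_horn.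
- exact: filler_mul_left th_natural th_const_below th_horn.
Qed.

End Inverse.

End HomotopyInverses.

Theorem mainTheorem6 (X : ssSet) (m : nat) (x : X 0) :
  1 <= m -> is_strat X -> weak_complicial X ->
  (forall k (s : X k), m <= k -> sthin s) ->
  forall n, m <= n -> tau_is_group n x.
Proof.
move=> m_gt0 X_strat X_wc thin_ge_m n le_mn a a_sphere.
exact: (sphere_tau_inverse m_gt0 X_strat X_wc thin_ge_m le_mn a_sphere).
Qed.
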